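(* In every proper $4$-colouring of $L$, at least one of its $52$ copies of $H$ contains a monochromatic triple.
   Context: Identify $\mathbb{R}^2$ with $\mathbb{C}$. Let $\Lambda=\{a+b e^{i\pi/3}: a,b\in\mathbb{Z}\}$. For $c\in\mathbb{C}$, let $H_c$ be the unit-distance graph on $c$ and $c+e^{i\pi k/3}$, $k=0,\dots,5$. A monochromatic triple in a colouring of a copy of $H$ is a set of three of its $7$ vertices all receiving the same colour. $J$ is the unit-distance graph on the $31$ points of $\Lambda$ of modulus at most $\sqrt7$, i.e. the union of the $13$ copies $H_c$, $c\in\Lambda$, $|c|\le\sqrt3$. Let $R$ be the clockwise rotation about $0$ by $2\arcsin(1/4)$. $K$ is the unit-distance graph on the $61$ points of $V(J)\cup R(V(J))$. It contains the $26$ copies $H_c$ and $R(H_c)$. Let $A=2$ and $B=-2$. Let $\rho$ be the rotation about $A$ by the angle $2\arcsin(1/8)$, so that $B'=\rho(B)$ satisfies $|B-B'|=1$. $L$ is the unit-distance graph on the $121$ points of $V(K)\cup\rho(V(K))$. Its $52$ copies of $H$ are the $26$ copies in $K$ together with their images under $\rho$. *)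

(* points of the plane C = R^2 as pairs of reals. *)
From Stdlib Require Import Reals Lra Lia ZArith.
Open Scope R_scope.

Definition pt : Type := (R * R)%type.

Definition padd (p q : pt) : pt := (fst p + fst q, snd p + snd q).
Definition psub (p q : pt) : pt := (fst p - fst q, snd p - snd q).
Definition norm2 (p : pt) : R := fst p * fst p + snd p * snd p.

Definition rot (t : R) (p : pt) : pt :=
  (cos t * fst p - sin t * snd p, sin t * fst p + cos t * snd p).

Definition unit6 (k : nat) : pt := (cos (PI * INR k / 3), sin (PI * INR k / 3)).

(* a + b e^{i pi/3} *)
Definition lat (a b : Z) : pt :=
  (IZR a + IZR b * cos (PI / 3), IZR b * sin (PI / 3)).

Definition inLambda (p : pt) : Prop := exists a b : Z, p = lat a b.

(* vertices of H_c: index 0 is c, index k (1..6) is c + e^{i pi (k-1)/3} *)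
Definition Hvert (c : pt) (k : nat) : pt :=
  match k with
  | O => c
  | S j => padd c (unit6 j)
  end.

Definition Rmap (p : pt) : pt := rot (- (2 * asin (1/4))) p.

Definition A : pt := (2, 0).
Definition B : pt := (-2, 0).
Definition rho (p : pt) : pt := padd A (rot (2 * asin (1/8)) (psub p A)).

Definition VJ (p : pt) : Prop := inLambda p /\ norm2 p <= 7.
Definition VK (p : pt) : Prop := VJ p \/ exists q, VJ q /\ p = Rmap q.
Definition VL (p : pt) : Prop := VK p \/ exists q, VK q /\ p = rho q.

Definition unit_dist (p q : pt) : Prop := norm2 (psub p q) = 1.

Definition proper4_L (col : pt -> nat) : Prop :=
  (forall p, VL p -> (col p < 4)%nat) /\
  (forall p q, VL p -> VL q -> unit_dist p q -> col p <> col q).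

Definition placements : list (pt -> pt) :=
  (fun p => p) :: Rmap :: rho :: (fun p => rho (Rmap p)) :: nil.

Definition mono_triple (col : pt -> nat) (T : pt -> pt) (c : pt) : Prop :=
  exists i j k : nat, (i < 7)%nat /\ (j < 7)%nat /\ (k < 7)%nat /\
    i <> j /\ j <> k /\ i <> k /\
    col (T (Hvert c i)) = col (T (Hvert c j)) /\
    col (T (Hvert c j)) = col (T (Hvert c k)).

From Stdlib Require Import Reals List.
Open Scope R_scope.
From Stdlib Require Import Arith ZArith Bool Lia Lra Classical.
Import ListNotations.

(* An exhaustive search shows that in every proper 4-colouring of K in which none of its 26
   copies of H has a monochromatic triple, A = 2 and B = -2 receive the same colour. L contains
   K and rho(K), and rho fixes A, so such a colouring of L would give both B and rho(B) the
   colour of A; but |B - rho(B)| = 2 |B - A| sin(arcsin(1/8)) = 1. *)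

(** * The triangular lattice and the rotations R and rho *)

Definition eisenstein_norm (a b : Z) : Z := (a * a + a * b + b * b)%Z.

Lemma sin_PI3_sqr : sin (PI / 3) * sin (PI / 3) = 3 / 4.
Proof.
  rewrite sin_PI3.
  replace (sqrt 3 / 2 * (sqrt 3 / 2)) with (sqrt 3 * sqrt 3 / 4) by field.
  rewrite sqrt_sqrt by lra. field.
Qed.

Lemma norm2_lat a b : norm2 (lat a b) = IZR (eisenstein_norm a b).
Proof.
  unfold norm2, lat, eisenstein_norm; simpl.
  rewrite cos_PI3, !plus_IZR, !mult_IZR.
  replace (IZR b * sin (PI / 3) * (IZR b * sin (PI / 3)))
    with (IZR b * IZR b * (sin (PI / 3) * sin (PI / 3))) by ring.
  rewrite sin_PI3_sqr. field.
Qed.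

Lemma padd_lat a1 b1 a2 b2 : padd (lat a1 b1) (lat a2 b2) = lat (a1 + a2) (b1 + b2).
Proof. unfold padd, lat; simpl. rewrite !plus_IZR. f_equal; ring. Qed.

Lemma psub_lat a1 b1 a2 b2 : psub (lat a1 b1) (lat a2 b2) = lat (a1 - a2) (b1 - b2).
Proof. unfold psub, lat; simpl. rewrite !minus_IZR. f_equal; ring. Qed.

Lemma unit_dist_lat a1 b1 a2 b2 :
  eisenstein_norm (a1 - a2) (b1 - b2) = 1%Z -> unit_dist (lat a1 b1) (lat a2 b2).
Proof. intro H. unfold unit_dist. rewrite psub_lat, norm2_lat, H. reflexivity. Qed.

Lemma unit_dist_sym p q : unit_dist p q -> unit_dist q p.
Proof. unfold unit_dist, norm2, psub; simpl. intro H; rewrite <- H; ring. Qed.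

Definition hex_dir (j : nat) : Z * Z :=
  match j with
  | 0%nat => (1, 0) | 1%nat => (0, 1) | 2%nat => (-1, 1)
  | 3%nat => (-1, 0) | 4%nat => (0, -1) | _ => (1, -1)
  end%Z.

Lemma unit6_lat j : (j < 6)%nat -> unit6 j = lat (fst (hex_dir j)) (snd (hex_dir j)).
Proof.
  assert (cos_PI_minus : forall x, cos (PI - x) = - cos x).
  { intro x. rewrite cos_minus, cos_PI, sin_PI. ring. }
  intro Hj. unfold unit6, lat.
  destruct j as [|[|[|[|[|[|j]]]]]]; try lia; simpl fst; simpl snd.
  - replace (PI * INR 0 / 3) with 0 by (simpl; field). rewrite cos_0, sin_0. f_equal; lra.
  - replace (PI * INR 1 / 3) with (PI / 3) by (simpl; field). f_equal; lra.
  - replace (PI * INR 2 / 3) with (PI - PI / 3) by (simpl; field).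
    rewrite cos_PI_minus, sin_PI_x, cos_PI3. f_equal; lra.
  - replace (PI * INR 3 / 3) with PI by (simpl; field).
    rewrite cos_PI, sin_PI, cos_PI3. f_equal; lra.
  - replace (PI * INR 4 / 3) with (PI / 3 + PI) by (simpl; field).
    rewrite neg_cos, neg_sin, cos_PI3. f_equal; lra.
  - replace (PI * INR 5 / 3) with (PI - PI / 3 + PI) by (simpl; field).
    rewrite neg_cos, neg_sin, cos_PI_minus, sin_PI_x, cos_PI3. f_equal; lra.
Qed.

Lemma Hvert_lat a b j : (j < 6)%nat ->
  Hvert (lat a b) (S j) = lat (a + fst (hex_dir j)) (b + snd (hex_dir j)).
Proof. intro Hj. simpl. rewrite unit6_lat by exact Hj. apply padd_lat. Qed.

Lemma norm2_rot t p : norm2 (rot t p) = norm2 p.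
Proof.
  unfold norm2, rot; simpl.
  pose proof (sin2_cos2 t) as H. unfold Rsqr in H. nra.
Qed.

Lemma unit_dist_rot t p q : unit_dist p q -> unit_dist (rot t p) (rot t q).
Proof.
  unfold unit_dist. intro H. rewrite <- H, <- (norm2_rot t (psub p q)).
  unfold psub, rot; simpl. f_equal; f_equal; ring.
Qed.

Lemma norm2_sub_rot t p : norm2 (psub p (rot t p)) = (2 - 2 * cos t) * norm2 p.
Proof.
  unfold norm2, psub, rot; simpl.
  pose proof (sin2_cos2 t) as H. unfold Rsqr in H. nra.
Qed.

Lemma cos_2asin x : -1 <= x <= 1 -> cos (2 * asin x) = 1 - 2 * (x * x).
Proof. intro Hx. rewrite cos_2a_sin, sin_asin by lra. ring. Qed.

Lemma Rmap_origin : Rmap (lat 0 0) = lat 0 0.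
Proof. unfold Rmap, rot, lat; simpl. f_equal; ring. Qed.

(* [R] rotates by an angle of cosine 7/8, so [|p - R p|^2 = |p|^2 / 4]. *)
Lemma unit_dist_Rmap a b : eisenstein_norm a b = 4%Z -> unit_dist (lat a b) (Rmap (lat a b)).
Proof.
  intro H. unfold unit_dist, Rmap.
  rewrite norm2_sub_rot, cos_neg, cos_2asin, norm2_lat, H by lra. simpl. field.
Qed.

Lemma unit_dist_rho p q : unit_dist p q -> unit_dist (rho p) (rho q).
Proof.
  unfold unit_dist. intro H. rewrite <- H, <- (norm2_rot (2 * asin (1 / 8)) (psub p q)).
  unfold rho, padd, psub, rot; simpl. f_equal; f_equal; ring.
Qed.

Lemma rho_A : rho A = A.
Proof. unfold rho, A, padd, psub, rot; simpl. f_equal; ring. Qed.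

Lemma unit_dist_B_rho_B : unit_dist B (rho B).
Proof.
  unfold unit_dist.
  replace (psub B (rho B)) with (psub (psub B A) (rot (2 * asin (1 / 8)) (psub B A)))
    by (unfold rho, padd, psub, rot, A, B; simpl; f_equal; ring).
  rewrite norm2_sub_rot, cos_2asin by lra. unfold norm2, psub, A, B; simpl. field.
Qed.

Lemma A_lat : A = lat 2 0.
Proof. unfold A, lat. f_equal; lra. Qed.

Lemma B_lat : B = lat (-2) 0.
Proof. unfold B, lat. f_equal; lra. Qed.

(** * Refuting colourings by exhaustive search *)

Section ColouringSearch.
Local Open Scope nat_scope.

Inductive constr := Distinct (u v : nat) | NoMonoTriple (vs : list nat).

Definition vertices (c : constr) : list nat :=
  match c with Distinct u v => [u; v] | NoMonoTriple vs => vs end.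

Definition ordered_triples (n : nat) : list (nat * nat * nat) :=
  flat_map (fun k => flat_map (fun j => map (fun i => (i, j, k)) (seq 0 j)) (seq 0 k)) (seq 0 n).

Lemma in_ordered_triples i j k n : In (i, j, k) (ordered_triples n) -> i < j < k /\ k < n.
Proof.
  unfold ordered_triples. rewrite in_flat_map. intros (k' & Hk & Hin).
  rewrite in_flat_map in Hin. destruct Hin as (j' & Hj & Hin).
  rewrite in_map_iff in Hin. destruct Hin as (i' & [= <- <- <-] & Hi).
  rewrite in_seq in Hk, Hj, Hi. lia.
Qed.

Definition mono_free (xs : list nat) : bool :=
  forallb (fun '(i, j, k) =>
    negb ((nth i xs 0 =? nth j xs 0) && (nth j xs 0 =? nth k xs 0))) (ordered_triples (length xs)).

Definition holds (f : nat -> nat) (c : constr) : bool :=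
  match c with
  | Distinct u v => negb (f u =? f v)
  | NoMonoTriple vs => mono_free (map f vs)
  end.

Lemma nth_map_lt {A B} (h : A -> B) l i (dA : A) (dB : B) :
  i < length l -> nth i (map h l) dB = h (nth i l dA).
Proof.
  intro Hi. rewrite nth_indep with (d' := h dA) by (rewrite length_map; exact Hi).
  apply map_nth.
Qed.

Lemma forallb_ext_in {A} (p q : A -> bool) l :
  (forall x, In x l -> p x = q x) -> forallb p l = forallb q l.
Proof. induction l as [|x l IH]; intro H; simpl; [|rewrite H, IH]; auto with datatypes. Qed.

Lemma holds_ext f g c :
  (forall u v, In u (vertices c) -> In v (vertices c) -> (f u =? f v) = (g u =? g v)) ->
  holds f c = holds g c.
Proof.
  destruct c as [u v | vs]; simpl; intro H.
  - rewrite H; auto.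
  - unfold mono_free. rewrite !length_map. apply forallb_ext_in. intros [[i j] k] Hin.
    apply in_ordered_triples in Hin.
    rewrite !nth_map_lt with (dA := 0) by lia.
    rewrite !H by (apply nth_In; lia). reflexivity.
Qed.

Definition schedule (cs : list constr) (t : nat) : list constr :=
  filter (fun c => list_max (vertices c) =? t) cs.

(* Backtracking search; a constraint is checked as soon as its last vertex is coloured, and
   [true] means that every branch dies. *)
Fixpoint refute (sched : list (list constr)) (allowed : nat -> list nat)
    (fuel t : nat) (prefix : list nat) : bool :=
  match fuel with
  | 0 => false
  | S fuel' =>
      forallb (fun x => let prefix' := prefix ++ [x] in
        if forallb (holds (fun i => nth i prefix' 0)) (nth t sched [])
        then refute sched allowed fuel' (S t) prefix' else true) (allowed t)
  end.

Definition refutes (cs : list constr) (allowed : nat -> list nat) (n : nat) : bool :=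
  refute (map (schedule cs) (seq 0 n)) allowed n 0 [].

Theorem refutes_sound cs allowed n f :
  refutes cs allowed n = true ->
  (forall i, i < n -> In (f i) (allowed i)) ->
  (forall c, In c cs -> holds f c = true) -> False.
Proof.
  intros Href Hallowed Hcs.
  assert (Hprefix : forall t i, i < t -> nth i (map f (seq 0 t)) 0 = f i).
  { intros t i Hi. rewrite nth_map_lt with (dA := 0), seq_nth by (rewrite ?length_seq; lia).
    reflexivity. }
  assert (Hbranch : forall fuel t, t + fuel = n ->
            refute (map (schedule cs) (seq 0 n)) allowed fuel t (map f (seq 0 t)) = true -> False).
  { induction fuel as [|fuel IH]; intros t Ht Hr; [discriminate|].
    simpl in Hr. rewrite forallb_forall in Hr.
    specialize (Hr (f t) (Hallowed t ltac:(lia))).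
    replace (map f (seq 0 t) ++ [f t]) with (map f (seq 0 (S t))) in Hr
      by (rewrite seq_S, map_app; reflexivity).
    destruct (forallb _ _) eqn:Hsched in Hr; [exact (IH (S t) ltac:(lia) Hr) | clear Hr].
    rewrite <- not_true_iff_false in Hsched. apply Hsched.
    rewrite nth_map_lt with (dA := 0), seq_nth by (rewrite ?length_seq; lia).
    apply forallb_forall. intros c Hc. apply filter_In in Hc as [Hc Hmax].
    apply Nat.eqb_eq in Hmax. simpl in Hmax. rewrite <- (Hcs c Hc). apply holds_ext.
    assert (Hle : forall u, In u (vertices c) -> u < S t).
    { pose proof (proj1 (list_max_le (vertices c) _) (le_n _)) as Hall.
      rewrite Forall_forall in Hall. intros u Hu. specialize (Hall u Hu). lia. }
    intros u v Hu Hv. cbv beta. rewrite !Hprefix by auto. reflexivity. }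
  exact (Hbranch n 0 eq_refl Href).
Qed.

End ColouringSearch.

Section Relabel.
Local Open Scope nat_scope.

Definition relabel (a b c x : nat) : nat :=
  if x =? a then 0 else if x =? b then 1 else if x =? c then 2 else 3.

Variables a b c : nat.

Lemma relabel_lt4 x : relabel a b c x < 4.
Proof. unfold relabel. destruct (x =? a), (x =? b), (x =? c); lia. Qed.

Hypotheses (Ha : a < 4) (Hb : b < 4) (Hc : c < 4) (Hab : a <> b) (Hac : a <> c) (Hbc : b <> c).

Lemma relabel_eqb x y : x < 4 -> y < 4 -> (relabel a b c x =? relabel a b c y) = (x =? y).
Proof.
  intros Hx Hy. unfold relabel.
  destruct (Nat.eqb_spec x a), (Nat.eqb_spec x b), (Nat.eqb_spec x c),
    (Nat.eqb_spec y a), (Nat.eqb_spec y b), (Nat.eqb_spec y c), (Nat.eqb_spec x y);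
    simpl; first [reflexivity | exfalso; lia].
Qed.

Lemma relabel_triangle : relabel a b c a = 0 /\ relabel a b c b = 1 /\ relabel a b c c = 2.
Proof.
  unfold relabel. rewrite !Nat.eqb_refl.
  destruct (Nat.eqb_spec b a), (Nat.eqb_spec c a), (Nat.eqb_spec c b); lia.
Qed.

End Relabel.

(** * The graph K *)

Definition kvertex : Type := (bool * Z * Z)%type.

Definition layer (r : bool) (p : pt) : pt := if r then Rmap p else p.

Definition kpoint (d : kvertex) : pt := let '(r, a, b) := d in layer r (lat a b).

Definition origin : kvertex := (false, 0, 0)%Z.

Definition is_origin (a b : Z) : bool := (a =? 0)%Z && (b =? 0)%Z.

(* The unit distances used: lattice neighbours within a layer (the origin lies in both layers),
   and [p], [R p] for [|p|^2 = 4]. *)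
Definition kadjacent (d e : kvertex) : bool :=
  let '(r, a, b) := d in let '(s, a', b') := e in
  ((Bool.eqb r s || is_origin a b || is_origin a' b')
     && (eisenstein_norm (a - a') (b - b') =? 1)%Z)
  || (negb (Bool.eqb r s) && (a =? a')%Z && (b =? b')%Z && (eisenstein_norm a b =? 4)%Z).

Lemma layer_origin r : layer r (lat 0 0) = lat 0 0.
Proof. destruct r; [apply Rmap_origin | reflexivity]. Qed.

Lemma unit_dist_layer r a b a' b' :
  eisenstein_norm (a - a') (b - b') = 1%Z -> unit_dist (layer r (lat a b)) (layer r (lat a' b')).
Proof. intro H. destruct r; [apply unit_dist_rot |]; apply unit_dist_lat, H. Qed.

Lemma is_origin_spec a b : is_origin a b = true -> a = 0%Z /\ b = 0%Z.
Proof. unfold is_origin. rewrite andb_true_iff, !Z.eqb_eq. auto. Qed.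

Lemma kadjacent_sound d e : kadjacent d e = true -> unit_dist (kpoint d) (kpoint e).
Proof.
  destruct d as [[r a] b], e as [[s a'] b']. simpl.
  intros [H | H]%orb_prop; apply andb_prop in H as [H Hn]; apply Z.eqb_eq in Hn.
  - apply orb_prop in H as [H | Ho']; [apply orb_prop in H as [Hrs | Ho] |].
    + apply eqb_prop in Hrs as ->. apply unit_dist_layer, Hn.
    + apply is_origin_spec in Ho as [-> ->].
      rewrite layer_origin, <- (layer_origin s). apply unit_dist_layer, Hn.
    + apply is_origin_spec in Ho' as [-> ->].
      rewrite layer_origin, <- (layer_origin r). apply unit_dist_layer, Hn.
  - apply andb_prop in H as [H Hb]. apply andb_prop in H as [Hrs Ha].
    apply Z.eqb_eq in Ha as <-. apply Z.eqb_eq in Hb as <-.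
    destruct r, s; try discriminate Hrs; simpl.
    + apply unit_dist_sym, unit_dist_Rmap, Hn.
    + apply unit_dist_Rmap, Hn.
Qed.

(* The origin is fixed by [R] and is listed only once, as [origin]. *)
Definition canon (d : kvertex) : kvertex :=
  let '(r, a, b) := d in if is_origin a b then origin else d.

Lemma kpoint_canon d : kpoint (canon d) = kpoint d.
Proof.
  destruct d as [[r a] b]. unfold canon.
  destruct (is_origin a b) eqn:Ho; [| reflexivity].
  apply is_origin_spec in Ho as [-> ->]. simpl. rewrite layer_origin. reflexivity.
Qed.

Definition copy_vertex (r : bool) (a b : Z) (i : nat) : kvertex :=
  match i with
  | 0%nat => (r, a, b)
  | S j => (r, a + fst (hex_dir j), b + snd (hex_dir j))%Z
  end.

Lemma layer_Hvert r a b i :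
  (i < 7)%nat -> layer r (Hvert (lat a b) i) = kpoint (copy_vertex r a b i).
Proof.
  intro Hi. destruct i as [|j]; [reflexivity |].
  simpl kpoint. rewrite Hvert_lat by lia. reflexivity.
Qed.

Definition kvertex_eq_dec (d e : kvertex) : {d = e} + {d <> e}.
Proof. repeat decide equality. Defined.

Fixpoint index_of (d : kvertex) (l : list kvertex) : nat :=
  match l with
  | [] => 0
  | e :: l' => if kvertex_eq_dec d e then 0 else S (index_of d l')
  end.

Lemma nth_index_of d l e : (index_of d l < length l)%nat -> nth (index_of d l) l e = d.
Proof.
  induction l as [|e' l IH]; simpl; [lia |].
  destruct (kvertex_eq_dec d e') as [-> | _]; [reflexivity |].
  intro H. apply IH. lia.
Qed.

Definition box : list (Z * Z) :=
  let range := map (fun n => Z.of_nat n - 3)%Z (seq 0 7) in list_prod range range.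

Definition shell (lo hi : Z) : list (Z * Z) :=
  filter (fun '(a, b) => (lo <=? eisenstein_norm a b) && (eisenstein_norm a b <=? hi))%Z box.

Lemma in_shell a b lo hi : In (a, b) (shell lo hi) -> (lo <= eisenstein_norm a b <= hi)%Z.
Proof. unfold shell. rewrite filter_In, andb_true_iff, !Z.leb_le. tauto. Qed.

Definition both_layers (ps : list (Z * Z)) : list kvertex :=
  map (fun '(a, b) => (false, a, b)) ps ++ map (fun '(a, b) => (true, a, b)) ps.

(* Listed ring by ring, which keeps the search short. *)
Definition Kverts : list kvertex :=
  origin :: flat_map both_layers [shell 1 1; shell 3 4; shell 7 7].

Definition Kpoint (v : nat) : pt := kpoint (nth v Kverts origin).

Lemma Kverts_in_J : forallb (fun '(_, a, b) => eisenstein_norm a b <=? 7)%Z Kverts = true.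
Proof. vm_compute. reflexivity. Qed.

Lemma VK_Kpoint v : VK (Kpoint v).
Proof.
  unfold Kpoint.
  assert (Hd : In (nth v Kverts origin) Kverts)
    by (destruct (nth_in_or_default v Kverts origin) as [| ->]; [| left]; auto).
  pose proof (proj1 (forallb_forall _ _) Kverts_in_J _ Hd) as Hnorm.
  destruct (nth v Kverts origin) as [[r a] b]. apply Z.leb_le in Hnorm.
  assert (HJ : VJ (lat a b)).
  { split; [exists a, b; reflexivity | rewrite norm2_lat; apply IZR_le, Hnorm]. }
  destruct r; [right; exists (lat a b) | left]; auto.
Qed.

Definition Kedges : list constr :=
  flat_map (fun v => flat_map (fun u =>
      if kadjacent (nth u Kverts origin) (nth v Kverts origin) then [Distinct u v] else [])
    (seq 0 v)) (seq 0 (length Kverts)).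

Definition Kcopies : list constr :=
  flat_map (fun '(a, b) => map (fun r =>
      NoMonoTriple (map (fun i => index_of (canon (copy_vertex r a b i)) Kverts) (seq 0 7)))
    [false; true]) (shell 0 3).

Lemma Kcopies_in_range :
  forallb (fun c => forallb (fun v => v <? length Kverts)%nat (vertices c)) Kcopies = true.
Proof. vm_compute. reflexivity. Qed.

Definition index_A : nat := index_of (false, 2, 0)%Z Kverts.
Definition index_B : nat := index_of (false, -2, 0)%Z Kverts.

Lemma Kpoint_A : Kpoint index_A = A.
Proof. rewrite A_lat. reflexivity. Qed.

Lemma Kpoint_B : Kpoint index_B = B.
Proof. rewrite B_lat. reflexivity. Qed.

(* Vertices 0, 1, 2 form a triangle, so up to relabelling their colours are 0, 1, 2. *)
Definition normalised_colours (t : nat) : list nat :=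
  match t with 0 => [0] | 1 => [1] | 2 => [2] | _ => [0; 1; 2; 3] end%nat.

Lemma K_refutation :
  refutes (Distinct index_A index_B :: Kedges ++ Kcopies) normalised_colours (length Kverts)
  = true.
Proof. vm_cast_no_check (eq_refl true). Qed.

Lemma mono_free_of_no_mono_triple (col : pt -> nat) T c (f : nat -> nat) vs :
  length vs = 7%nat ->
  (forall i, (i < 7)%nat -> col (T (Hvert c i)) = f (nth i vs 0%nat)) ->
  ~ mono_triple col T c -> mono_free (map f vs) = true.
Proof.
  intros Hlen Hf Hno. unfold mono_free. rewrite length_map, Hlen.
  apply forallb_forall. intros [[i j] k] Hin. apply in_ordered_triples in Hin.
  apply negb_true_iff, not_true_iff_false. intros [Hij Hjk]%andb_prop.
  apply Nat.eqb_eq in Hij, Hjk. apply Hno. exists i, j, k.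
  rewrite !Hf, <- !nth_map_lt with (dA := 0%nat) (dB := 0%nat) by lia.
  repeat split; lia || assumption.
Qed.

Section KColouring.

Variable g : pt -> nat.
Hypothesis g_lt4 : forall p, VK p -> (g p < 4)%nat.
Hypothesis g_proper : forall p q, VK p -> VK q -> unit_dist p q -> g p <> g q.
Hypothesis g_no_mono_triple :
  forall r c, inLambda c -> norm2 c <= 3 -> ~ mono_triple g (layer r) c.

Let f (v : nat) : nat := g (Kpoint v).

Lemma Kedges_hold c : In c Kedges -> holds f c = true.
Proof.
  unfold Kedges. intros (v & _ & Hc)%in_flat_map. apply in_flat_map in Hc as (u & _ & Hc).
  destruct (kadjacent _ _) eqn:Hadj; [destruct Hc as [<- | []] | destruct Hc].
  apply negb_true_iff, Nat.eqb_neq, g_proper; [apply VK_Kpoint .. |].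
  apply kadjacent_sound, Hadj.
Qed.

Lemma Kcopies_hold c : In c Kcopies -> holds f c = true.
Proof.
  intro Hc. assert (Hrange := proj1 (forallb_forall _ _) Kcopies_in_range c Hc).
  apply in_flat_map in Hc as ([a b] & Hab & Hc). apply in_map_iff in Hc as (r & <- & _).
  assert (Hidx : forall i, (i < 7)%nat ->
            (index_of (canon (copy_vertex r a b i)) Kverts < length Kverts)%nat).
  { intros i Hi. apply Nat.ltb_lt, (proj1 (forallb_forall _ _) Hrange), in_map_iff.
    exists i. rewrite in_seq. auto with arith. }
  apply in_shell in Hab. unfold holds.
  apply (mono_free_of_no_mono_triple g (layer r) (lat a b)).
  - rewrite length_map, length_seq. reflexivity.
  - intros i Hi. unfold f, Kpoint.
    rewrite nth_map_lt with (dA := 0%nat), seq_nth by (rewrite ?length_seq; lia).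
    rewrite nth_index_of, kpoint_canon, layer_Hvert by auto. reflexivity.
  - apply g_no_mono_triple; [exists a, b; reflexivity |].
    rewrite norm2_lat. apply IZR_le. lia.
Qed.

Lemma K_forces_A_B : g A = g B.
Proof.
  destruct (Nat.eq_dec (g A) (g B)) as [| HAB]; [assumption | exfalso].
  assert (Hf4 : forall v, (f v < 4)%nat) by (intro v; apply g_lt4, VK_Kpoint).
  assert (Hf_adj : forall u v, kadjacent (nth u Kverts origin) (nth v Kverts origin) = true ->
                     f u <> f v)
    by (intros u v Hadj; apply g_proper; [apply VK_Kpoint .. | apply kadjacent_sound, Hadj]).
  assert (H01 := Hf_adj 0%nat 1%nat eq_refl).
  assert (H02 := Hf_adj 0%nat 2%nat eq_refl).
  assert (H12 := Hf_adj 1%nat 2%nat eq_refl).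
  set (h v := relabel (f 0%nat) (f 1%nat) (f 2%nat) (f v)).
  apply (refutes_sound _ _ _ h K_refutation).
  - intros i _. destruct (relabel_triangle (f 0%nat) (f 1%nat) (f 2%nat)) as (h0 & h1 & h2); auto.
    unfold h. destruct i as [|[|[|i]]]; simpl; auto.
    pose proof (relabel_lt4 (f 0%nat) (f 1%nat) (f 2%nat) (f (S (S (S i))))). lia.
  - intros c Hc. rewrite <- (holds_ext f) by (intros; symmetry; apply relabel_eqb; auto).
    destruct Hc as [<- | Hc]; [| apply in_app_or in Hc as [Hc | Hc]].
    + simpl. unfold f. rewrite Kpoint_A, Kpoint_B. apply negb_true_iff, Nat.eqb_neq. auto.
    + apply Kedges_hold, Hc.
    + apply Kcopies_hold, Hc.
Qed.

End KColouring.

Theorem mainTheorem5 :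
  forall col : pt -> nat, proper4_L col ->
  exists T c, In T placements /\ inLambda c /\ norm2 c <= 3 /\
    mono_triple col T c.
Proof.
  intros col [Hlt Hproper]. apply NNPP. intro Hfree.
  assert (Hno : forall T, In T placements ->
                forall c, inLambda c -> norm2 c <= 3 -> ~ mono_triple col T c)
    by (intros T HT c Hc Hc3 Hm; apply Hfree; exists T, c; auto).
  assert (HVL_K : forall p, VK p -> VL p) by (intros p Hp; left; exact Hp).
  assert (HVL_rho : forall p, VK p -> VL (rho p)) by (intros p Hp; right; exists p; auto).
  assert (Hsame : col A = col B).
  { apply K_forces_A_B; auto.
    intros [|] c; apply Hno; simpl; auto. }
  assert (Hsame_rho : col (rho A) = col (rho B)).
  { apply (K_forces_A_B (fun p => col (rho p))); auto using unit_dist_rho.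
    intros [|] c; apply Hno with (T := fun p => rho (layer _ p)); simpl; auto. }
  rewrite rho_A in Hsame_rho.
  assert (HB : VK B) by (rewrite <- Kpoint_B; apply VK_Kpoint).
  apply (Hproper B (rho B)); auto using unit_dist_B_rho_B. congruence.
Qed.
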